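(* Let $\Pi$ be an $n$-dimensional linear space satisfying the exchange axiom and let $S$ and $U$ be distinct subspaces of $\Pi$. The following are equivalent: (1) there exists a base of $\Pi$ such that both $S$ and $U$ are spanned by points of this base; (2) $\dim\overline{S\cup U}=\dim S+\dim U-\dim(S\cap U)$.
   Context: A linear space $\Pi=(P,\mathcal{L})$ is a set $P$ of points with a family $\mathcal{L}$ of proper subsets (lines) such that each line has at least two points and any two distinct points $p,q$ lie on exactly one line $pq$. A subspace is a set $S\subset P$ with $pq\subset S$ for all distinct $p,q\in S$; $\overline{X}$ is the smallest subspace containing $X$. A set $X$ is independent if $\overline{X}$ is not spanned by a proper subset of $X$; a base of $\Pi$ is an independent set spanning $P$. A subspace is $m$-dimensional if $m+1$ is the smallest number of points spanning it (the empty set is $(-1)$-dimensional). Exchange axiom: for every $X\subset P$ and $p_1,p_2\in P\setminus\overline{X}$, $p_2\in\overline{X\cup\{p_1\}}$ implies $p_1\in\overline{X\cup\{p_2\}}$. *)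

From Stdlib Require Import List ZArith.
Import ListNotations.

Section LinSpace.
Context {P : Type}.

Definition sub (X Y : P -> Prop) : Prop := forall x, X x -> Y x.
Definition seteq (X Y : P -> Prop) : Prop := forall x, X x <-> Y x.

Definition linear_space (L : (P -> Prop) -> Prop) : Prop :=
  (forall l, L l -> exists p, ~ l p) /\
  (forall l, L l -> exists p q, p <> q /\ l p /\ l q) /\
  (forall p q, p <> q -> exists l, L l /\ l p /\ l q /\
       forall l', L l' -> l' p -> l' q -> seteq l' l).

Definition subspace (L : (P -> Prop) -> Prop) (S : P -> Prop) : Prop :=
  forall p q l, S p -> S q -> p <> q -> L l -> l p -> l q -> sub l S.

Definition closure (L : (P -> Prop) -> Prop) (X : P -> Prop) : P -> Prop :=
  fun x => forall S, subspace L S -> sub X S -> S x.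

Definition independent (L : (P -> Prop) -> Prop) (X : P -> Prop) : Prop :=
  ~ exists Y, sub Y X /\ (exists x, X x /\ ~ Y x) /\
      seteq (closure L Y) (closure L X).

Definition base (L : (P -> Prop) -> Prop) (B : P -> Prop) : Prop :=
  independent L B /\ seteq (closure L B) (fun _ => True).

Definition has_dim (L : (P -> Prop) -> Prop) (S : P -> Prop) (m : Z) : Prop :=
  (exists l : list P, NoDup l /\ Z.of_nat (length l) = (m + 1)%Z /\
      seteq (closure L (fun x => In x l)) S) /\
  (forall l : list P, seteq (closure L (fun x => In x l)) S ->
      (m + 1 <= Z.of_nat (length l))%Z).

Definition exchange_axiom (L : (P -> Prop) -> Prop) : Prop :=
  forall (X : P -> Prop) p1 p2,
    ~ closure L X p1 -> ~ closure L X p2 ->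
    closure L (fun x => X x \/ x = p1) p2 ->
    closure L (fun x => X x \/ x = p2) p1.

End LinSpace.

(* With the exchange axiom, closure behaves like a matroid: by Steinitz exchange every
   free list is no longer than any spanning list, so free spanning lists of a subspace
   all have length dimension + 1.  If S and U are spanned by parts X and Y of one base,
   the lists X \ Y, Y \ X and X ∩ Y glue to a free list spanning the join, and the
   modular law for free lists shows that X ∩ Y spans S ∩ U; counting gives the formula.
   Conversely, extend a free spanning list i of S ∩ U to free spanning lists a ++ i of S
   and c ++ i of U; the formula says that a ++ c ++ i spans the join with the minimal
   number of points, so it is free, and extending it to a free list spanning everything
   yields a base adapted to S and U. *)

From Stdlib Require Import List ZArith.
From Stdlib Require Import Classical Lia Permutation.
Import ListNotations.

Set Implicit Arguments.
Unset Strict Implicit.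

Ltac set_incl :=
  let z := fresh "z" in let Hz := fresh "Hz" in
  intros z Hz; simpl in *; repeat rewrite in_app_iff in *; simpl in *;
  repeat match goal with
         | H : _ \/ _ |- _ => destruct H
         | H : _ /\ _ |- _ => destruct H
         end;
  subst; intuition auto.

Lemma bounded_enum {P : Type} (X : P -> Prop) (N : nat) :
  (forall l, NoDup l -> sub (fun z => In z l) X -> length l <= N) ->
  exists l, NoDup l /\ seteq (fun z => In z l) X.
Proof.
  intros Hb.
  assert (Hgrow : forall k l, N < length l + k -> NoDup l -> sub (fun z => In z l) X ->
            exists l', NoDup l' /\ seteq (fun z => In z l') X).
  { induction k as [|k IH]; intros l Hk Hnd Hl.
    - specialize (Hb l Hnd Hl); lia.
    - destruct (classic (sub X (fun z => In z l))) as [HX|HX].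
      + exists l; split; [exact Hnd|]. intro z; split; [apply Hl | apply HX].
      + apply not_all_ex_not in HX as [z Hz]. apply imply_to_and in Hz as [HzX Hzl].
        apply (IH (z :: l)); simpl; [lia | constructor; auto | intros w [<-|Hw]; auto]. }
  apply (Hgrow (S N) []); simpl; [lia | constructor | intros z []].
Qed.

Section ClosureSystem.
Context {P : Type} (L : (P -> Prop) -> Prop).

Local Notation cl := (closure L).
Local Notation span l := (closure L (fun x => In x l)).

Lemma closure_incl X : sub X (cl X).
Proof. intros x Hx S _ HXS. exact (HXS x Hx). Qed.

Lemma closure_mono X Y : sub X Y -> sub (cl X) (cl Y).
Proof. intros HXY x Hx S HS HYS. apply Hx; [exact HS|]. intros z Hz. exact (HYS z (HXY z Hz)). Qed.

Ltac closure_weaken t := generalize t; apply closure_mono; set_incl.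

Lemma closure_subspace X : subspace L (cl X).
Proof.
  intros p q l Hp Hq Hpq Hl Hlp Hlq z Hz S HS HXS.
  exact (HS p q l (Hp S HS HXS) (Hq S HS HXS) Hpq Hl Hlp Hlq z Hz).
Qed.

Lemma closure_min X S : subspace L S -> sub X S -> sub (cl X) S.
Proof. intros HS HXS x Hx. exact (Hx S HS HXS). Qed.

Lemma closure_sub_closure X Y : sub X (cl Y) -> sub (cl X) (cl Y).
Proof. apply closure_min, closure_subspace. Qed.

Lemma closure_seteq X Y : seteq X Y -> seteq (cl X) (cl Y).
Proof. intros HXY x; split; apply closure_mono; intro z; apply HXY. Qed.

Lemma subspace_inter S U : subspace L S -> subspace L U -> subspace L (fun x => S x /\ U x).
Proof.
  intros HS HU p q l [HpS HpU] [HqS HqU] Hpq Hl Hlp Hlq z Hz.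
  split; [exact (HS p q l HpS HqS Hpq Hl Hlp Hlq z Hz) |
          exact (HU p q l HpU HqU Hpq Hl Hlp Hlq z Hz)].
Qed.

Lemma subspace_full : subspace L (fun _ : P => True).
Proof. intros p q l _ _ _ _ _ _ z _. exact I. Qed.

(* [free_over C l]: the points of [l] are independent modulo [C]. *)
Fixpoint free_over (C : P -> Prop) (l : list P) : Prop :=
  match l with
  | [] => True
  | x :: l' => ~ cl (fun z => C z \/ In z l') x /\ free_over (fun z => C z \/ z = x) l'
  end.

Local Notation free := (free_over (fun _ => False)).

Lemma free_over_antitone l C D : sub C D -> free_over D l -> free_over C l.
Proof.
  revert C D; induction l as [|x l IH]; intros C D HCD Hf; simpl in *; [exact I|].
  destruct Hf as [Hx Hf]. split.
  - intro H; apply Hx; closure_weaken H.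
  - apply (IH _ (fun z => D z \/ z = x)); [set_incl | exact Hf].
Qed.

Lemma free_over_NoDup C l : free_over C l -> NoDup l.
Proof.
  revert C; induction l as [|x l IH]; intros C Hf; constructor; destruct Hf as [Hx Hf].
  - intro Hin; apply Hx, closure_incl; right; exact Hin.
  - exact (IH _ Hf).
Qed.

Lemma free_over_app_l C l m : free_over C (l ++ m) -> free_over (fun z => C z \/ In z m) l.
Proof.
  revert C; induction l as [|x l IH]; intros C Hf; simpl in *; [exact I|].
  destruct Hf as [Hx Hf]. split.
  - intro H; apply Hx; closure_weaken H.
  - apply free_over_antitone with (D := fun z => (C z \/ z = x) \/ In z m); [set_incl|].
    exact (IH _ Hf).
Qed.

Lemma free_over_not_in_closure C l x :
  free_over C l -> In x l -> ~ cl (fun z => C z \/ (In z l /\ z <> x)) x.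
Proof.
  revert C; induction l as [|y l IH]; intros C Hf Hin; [destruct Hin|].
  destruct Hf as [Hy Hf]. destruct (classic (x = y)) as [->|Hne].
  - intro H; apply Hy; closure_weaken H.
  - destruct Hin as [<-|Hin]; [congruence|]. intro H. apply (IH _ Hf Hin). closure_weaken H.
Qed.

Lemma not_free_over_shorter_span C l :
  ~ free_over C l -> exists l', length l' < length l /\ incl l' l /\
    sub (fun z => In z l) (cl (fun w => C w \/ In w l')).
Proof.
  revert C; induction l as [|x l IH]; intros C Hnf; [exfalso; exact (Hnf I)|].
  destruct (classic (cl (fun w => C w \/ In w l) x)) as [Hx|Hx].
  - exists l. split; [simpl; lia|]. split; [intros z Hz; right; exact Hz|].
    intros z [<-|Hz]; [exact Hx | apply closure_incl; right; exact Hz].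
  - assert (Hnf' : ~ free_over (fun w => C w \/ w = x) l) by (intro H; apply Hnf; split; auto).
    destruct (IH _ Hnf') as (l' & Hlen & Hincl & Hspan). exists (x :: l').
    split; [simpl; lia|]. split.
    + intros z [<-|Hz]; [left; reflexivity | right; apply Hincl, Hz].
    + intros z [<-|Hz]; [apply closure_incl; right; left; reflexivity|].
      specialize (Hspan z Hz); closure_weaken Hspan.
Qed.

Definition pointwise_independent (B : P -> Prop) : Prop :=
  forall x, B x -> ~ cl (fun z => B z /\ z <> x) x.

Lemma independent_pointwise B : independent L B -> pointwise_independent B.
Proof.
  intros HB x Hx H. apply HB. exists (fun z => B z /\ z <> x).
  split; [intros z [Hz _]; exact Hz|].
  split; [exists x; split; [exact Hx | intros [_ Hxx]; exact (Hxx eq_refl)]|].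
  intro z; split; [apply closure_mono; intros w [Hw _]; exact Hw|].
  apply closure_sub_closure. intros w Hw.
  destruct (classic (w = x)) as [->|Hne]; [exact H | apply closure_incl; split; auto].
Qed.

Lemma pointwise_independent_independent B : pointwise_independent B -> independent L B.
Proof.
  intros HB (Y & HYB & (x & Hx & HxY) & HYeq). unfold seteq in HYeq. apply (HB x Hx).
  assert (HxclY : cl Y x) by (apply HYeq, closure_incl, Hx).
  revert HxclY; apply closure_mono. intros w Hw; split; [apply HYB, Hw | intros ->; exact (HxY Hw)].
Qed.

Lemma pointwise_independent_free_over B C l :
  pointwise_independent B -> NoDup l -> sub (fun z => In z l) B -> sub C B ->
  (forall z, C z -> ~ In z l) -> free_over C l.
Proof.
  intros HB. revert C; induction l as [|x l IH]; intros C Hnd HlB HCB Hdisj; simpl; [exact I|].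
  inversion Hnd as [|? ? Hxl Hnd']; subst. split.
  - intro H. apply (HB x (HlB x (or_introl eq_refl))). revert H; apply closure_mono.
    intros z [Hz|Hz]; split.
    + exact (HCB z Hz).
    + intros ->; exact (Hdisj x Hz (or_introl eq_refl)).
    + apply HlB; right; exact Hz.
    + intros ->; exact (Hxl Hz).
  - apply IH; [exact Hnd' | intros z Hz; apply HlB; right; exact Hz | |].
    + intros z [Hz| ->]; [exact (HCB z Hz) | apply HlB; left; reflexivity].
    + intros z [Hz| ->] Hzl; [exact (Hdisj z Hz (or_intror Hzl)) | exact (Hxl Hzl)].
Qed.

Lemma free_pointwise_independent l : free l -> pointwise_independent (fun z => In z l).
Proof.
  intros Hf x Hx H. apply (free_over_not_in_closure Hf Hx). closure_weaken H.
Qed.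

Lemma free_sublist l m : free l -> NoDup m -> incl m l -> free m.
Proof.
  intros Hf Hnd Hml.
  apply (pointwise_independent_free_over (free_pointwise_independent Hf) Hnd Hml); intros z [].
Qed.

Lemma free_spanning_base l : free l -> seteq (span l) (fun _ => True) -> base L (fun z => In z l).
Proof.
  intros Hf Hspan. split; [|exact Hspan].
  exact (pointwise_independent_independent (free_pointwise_independent Hf)).
Qed.

Lemma has_dim_unique T d d' : has_dim L T d -> has_dim L T d' -> d = d'.
Proof.
  intros [(l & _ & Hl & Hspan) Hmin] [(l' & _ & Hl' & Hspan') Hmin'].
  specialize (Hmin l' Hspan'); specialize (Hmin' l Hspan). lia.
Qed.

Lemma free_of_min_length T d l :
  has_dim L T d -> seteq (span l) T -> Z.of_nat (length l) = (d + 1)%Z -> free l.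
Proof.
  intros [_ Hmin] Hspan Hlen. unfold seteq in Hspan. apply NNPP; intro Hnf.
  destruct (not_free_over_shorter_span Hnf) as (l' & Hlt & Hincl & Hl').
  enough (Hle : (d + 1 <= Z.of_nat (length l'))%Z) by lia.
  apply Hmin. intro x; split; intro Hx.
  - rewrite <- Hspan; revert Hx; apply closure_mono; intros z Hz; apply Hincl, Hz.
  - apply Hspan in Hx; revert Hx; apply closure_sub_closure.
    intros z Hz; specialize (Hl' z Hz); closure_weaken Hl'.
Qed.

Lemma span_app_union a c i S U :
  seteq (span (a ++ i)) S -> seteq (span (c ++ i)) U ->
  seteq (span (a ++ c ++ i)) (cl (fun x => S x \/ U x)).
Proof.
  intros HS HU x; unfold seteq in *; split; apply closure_sub_closure.
  - intros z Hz. apply closure_incl. rewrite !in_app_iff in Hz.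
    destruct Hz as [Hz|[Hz|Hz]]; [left; rewrite <- HS | right; rewrite <- HU | left; rewrite <- HS];
      apply closure_incl, in_app_iff; auto.
  - intros z [Hz|Hz]; [apply HS in Hz | apply HU in Hz]; closure_weaken Hz.
Qed.

Section Exchange.
Hypothesis Hex : exchange_axiom L.

Lemma exchange_in_list m C x :
  cl (fun z => C z \/ In z m) x -> ~ cl C x ->
  exists m1 y m2, m = m1 ++ y :: m2 /\ cl (fun z => (C z \/ z = x) \/ In z (m1 ++ m2)) y.
Proof.
  revert C; induction m as [|y m IH]; intros C Hx HC.
  - exfalso; apply HC; closure_weaken Hx.
  - destruct (classic (cl (fun z => C z \/ z = y) x)) as [Hxy|Hxy].
    + assert (Hy : ~ cl C y).
      { intro Hy. apply HC. revert Hxy; apply closure_sub_closure.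
        intros z [Hz| ->]; [apply closure_incl, Hz | exact Hy]. }
      exists [], y, m. split; [reflexivity|].
      closure_weaken (Hex Hy HC Hxy).
    + destruct (IH (fun z => C z \/ z = y)) as (m1 & y' & m2 & -> & Hy').
      * closure_weaken Hx.
      * exact Hxy.
      * exists (y :: m1), y', m2. split; [reflexivity|]. closure_weaken Hy'.
Qed.

Lemma steinitz C l m :
  free_over C l -> sub (fun z => In z l) (cl (fun w => C w \/ In w m)) -> length l <= length m.
Proof.
  revert C m; induction l as [|x l IH]; intros C m Hf Hspan; simpl; [lia|].
  destruct Hf as [Hx Hf].
  assert (HxC : ~ cl C x) by (intro H; apply Hx; closure_weaken H).
  destruct (exchange_in_list (Hspan x (or_introl eq_refl)) HxC) as (m1 & y & m2 & -> & Hy).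
  assert (Hlen : length l <= length (m1 ++ m2)).
  { apply (IH _ _ Hf). intros z Hz.
    apply closure_sub_closure with (X := fun w => C w \/ In w (m1 ++ y :: m2)).
    - intros w [Hw|Hw]; [apply closure_incl; left; left; exact Hw|].
      rewrite in_app_iff in Hw; destruct Hw as [Hw|[<-|Hw]]; [| exact Hy |];
        apply closure_incl; right; apply in_app_iff; auto.
    - apply Hspan; right; exact Hz. }
  rewrite length_app in *; simpl; lia.
Qed.

Lemma free_over_add C l z :
  free_over C l -> ~ cl (fun w => C w \/ In w l) z -> free_over (fun w => C w \/ w = z) l.
Proof.
  revert C; induction l as [|x l IH]; intros C Hf Hz; simpl in *; [exact I|].
  destruct Hf as [Hx Hf]. split.
  - intro H. apply Hz.
    assert (Hz' : ~ cl (fun w => C w \/ In w l) z) by (intro H'; apply Hz; closure_weaken H').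
    assert (Hxz : cl (fun w => (C w \/ In w l) \/ w = z) x) by closure_weaken H.
    closure_weaken (Hex Hz' Hx Hxz).
  - apply free_over_antitone with (D := fun w => (C w \/ w = x) \/ w = z); [set_incl|].
    apply IH; [exact Hf|]. intro H; apply Hz; closure_weaken H.
Qed.

Lemma free_over_cons C l z :
  free_over C l -> ~ cl (fun w => C w \/ In w l) z -> free_over C (z :: l).
Proof. intros Hf Hz. exact (conj Hz (free_over_add Hf Hz)). Qed.

Lemma closure_meet a C D z :
  free_over (fun w => C w \/ D w) a -> cl (fun w => C w \/ In w a) z ->
  cl (fun w => C w \/ D w) z -> cl C z.
Proof.
  revert C D; induction a as [|x a IH]; intros C D Hf Ha HD.
  - closure_weaken Ha.
  - destruct Hf as [Hx Hf].
    apply (IH C D); [| | exact HD].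
    + apply free_over_antitone with (D := fun w => (C w \/ D w) \/ w = x); [set_incl | exact Hf].
    + (* Otherwise exchanging [z] for [x] puts [x] into [cl (C \/ D \/ a)]. *)
      apply NNPP; intro Hz.
      assert (Hx' : ~ cl (fun w => C w \/ In w a) x) by (intro H; apply Hx; closure_weaken H).
      assert (Hzx : cl (fun w => (C w \/ In w a) \/ w = x) z) by closure_weaken Ha.
      pose proof (Hex Hx' Hz Hzx) as Hxz. apply Hx. revert Hxz; apply closure_sub_closure.
      intros w [[Hw|Hw]| ->]; [apply closure_incl; left; left; exact Hw |
                               apply closure_incl; right; exact Hw | closure_weaken HD].
Qed.

Lemma span_app_meet a c i S U :
  free (a ++ c ++ i) -> seteq (span (a ++ i)) S -> seteq (span (c ++ i)) U ->
  seteq (span i) (fun x => S x /\ U x).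
Proof.
  intros Hf HS HU x; unfold seteq in *; split.
  - intro Hx; split; [rewrite <- HS | rewrite <- HU]; closure_weaken Hx.
  - intros [HxS HxU]. apply HS in HxS; apply HU in HxU.
    apply closure_meet with (a := a) (D := fun w => In w c).
    + apply free_over_antitone with (D := fun w => False \/ In w (c ++ i)); [set_incl|].
      exact (free_over_app_l Hf).
    + closure_weaken HxS.
    + closure_weaken HxU.
Qed.

Lemma has_dim_free l T : free l -> seteq (span l) T -> has_dim L T (Z.of_nat (length l) - 1).
Proof.
  intros Hf Hspan. unfold seteq in Hspan. split.
  - exists l. split; [exact (free_over_NoDup Hf)|]. split; [lia | exact Hspan].
  - intros m Hm. unfold seteq in Hm. enough (length l <= length m) by lia.
    apply (steinitz Hf). intros z Hz.
    apply closure_mono with (X := fun w => In w m); [set_incl|].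
    apply Hm; rewrite <- Hspan; apply closure_incl, Hz.
Qed.

Lemma free_length_bound n :
  has_dim L (fun _ => True) n -> exists N, forall l, free l -> length l <= N.
Proof.
  intros [(m & _ & _ & Hm) _]. unfold seteq in Hm.
  exists (length m). intros l Hf. apply (steinitz Hf).
  intros z _. apply closure_mono with (X := fun w => In w m); [set_incl | apply Hm; exact I].
Qed.

Lemma free_extend N T :
  (forall l, free l -> length l <= N) -> subspace L T ->
  forall l, free l -> sub (fun z => In z l) T ->
  exists m, free (m ++ l) /\ seteq (span (m ++ l)) T.
Proof.
  intros HN HT.
  assert (Hgrow : forall k l, N < length l + k -> free l -> sub (fun z => In z l) T ->
            exists m, free (m ++ l) /\ seteq (span (m ++ l)) T).
  { induction k as [|k IH]; intros l Hk Hf HlT.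
    - specialize (HN l Hf); lia.
    - destruct (classic (sub T (span l))) as [Hspan|Hspan].
      + exists []. split; [exact Hf|]. intro x; split; [apply closure_min; auto | apply Hspan].
      + apply not_all_ex_not in Hspan as [z Hz]. apply imply_to_and in Hz as [HzT Hzl].
        destruct (IH (z :: l)) as (m & Hm & Hmspan).
        * simpl; lia.
        * apply free_over_cons; [exact Hf|]. intro H; apply Hzl; closure_weaken H.
        * intros w [<-|Hw]; [exact HzT | exact (HlT w Hw)].
        * exists (m ++ [z]). rewrite <- app_assoc. split; assumption. }
  intros l. apply (Hgrow (S N) l). lia.
Qed.

Lemma has_dim_of_free_split a c i S U :
  free (a ++ c ++ i) -> seteq (span (a ++ i)) S -> seteq (span (c ++ i)) U ->
  has_dim L (cl (fun x => S x \/ U x)) (Z.of_nat (length (a ++ c ++ i)) - 1) /\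
  has_dim L S (Z.of_nat (length (a ++ i)) - 1) /\
  has_dim L U (Z.of_nat (length (c ++ i)) - 1) /\
  has_dim L (fun x => S x /\ U x) (Z.of_nat (length i) - 1).
Proof.
  intros Hf HS HU.
  pose proof (free_over_NoDup Hf) as Hnd.
  assert (Hnd_ai : NoDup (a ++ i)).
  { apply (NoDup_app_remove_l c), (Permutation_NoDup (Permutation_app_swap_app a c i)), Hnd. }
  pose proof (NoDup_app_remove_l _ _ Hnd) as Hnd_ci.
  pose proof (NoDup_app_remove_l _ _ Hnd_ci) as Hnd_i.
  split; [|split; [|split]]; apply has_dim_free.
  - exact Hf.
  - exact (span_app_union HS HU).
  - apply (free_sublist Hf Hnd_ai); set_incl.
  - exact HS.
  - apply (free_sublist Hf Hnd_ci); set_incl.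
  - exact HU.
  - apply (free_sublist Hf Hnd_i); set_incl.
  - exact (span_app_meet Hf HS HU).
Qed.

Lemma adapted_base_dim_formula N B X Y S U :
  (forall l, free l -> length l <= N) -> independent L B -> sub X B -> sub Y B ->
  seteq (cl X) S -> seteq (cl Y) U ->
  exists dJ dS dU dI : Z,
    has_dim L (cl (fun x => S x \/ U x)) dJ /\ has_dim L S dS /\ has_dim L U dU /\
    has_dim L (fun x => S x /\ U x) dI /\ dJ = (dS + dU - dI)%Z.
Proof.
  intros HN HBi HXB HYB HXS HYU.
  assert (Hfree : forall l, NoDup l -> sub (fun z => In z l) B -> free l).
  { intros l Hnd HlB.
    apply (pointwise_independent_free_over (independent_pointwise HBi) Hnd HlB); intros z []. }
  assert (Henum : forall Z, sub Z B -> exists l, NoDup l /\ seteq (fun z => In z l) Z).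
  { intros Z HZB. apply bounded_enum with (N := N). intros l Hnd HlZ.
    apply HN, Hfree; [exact Hnd | intros z Hz; apply HZB, HlZ, Hz]. }
  destruct (Henum (fun z => X z /\ ~ Y z)) as (a & Ha & HaXY); [intros z Hz; apply HXB, Hz|].
  destruct (Henum (fun z => Y z /\ ~ X z)) as (c & Hc & HcYX); [intros z Hz; apply HYB, Hz|].
  destruct (Henum (fun z => X z /\ Y z)) as (i & Hi & HiXY); [intros z Hz; apply HXB, Hz|].
  unfold seteq in HaXY, HcYX, HiXY.
  assert (Hf : free (a ++ c ++ i)).
  { apply Hfree.
    - apply NoDup_app; [exact Ha | apply NoDup_app; [exact Hc | exact Hi |] |];
        intros z Hz1 Hz2; rewrite ?in_app_iff, ?HaXY, ?HcYX, ?HiXY in *; tauto.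
    - intros z Hz; rewrite !in_app_iff, HaXY, HcYX, HiXY in Hz.
      destruct Hz as [[Hz _]|[[Hz _]|[Hz _]]]; auto. }
  assert (HS : seteq (span (a ++ i)) S).
  { intro x. rewrite <- (HXS x). apply closure_seteq. intro z.
    rewrite in_app_iff, HaXY, HiXY. destruct (classic (Y z)); tauto. }
  assert (HU : seteq (span (c ++ i)) U).
  { intro x. rewrite <- (HYU x). apply closure_seteq. intro z.
    rewrite in_app_iff, HcYX, HiXY. destruct (classic (X z)); tauto. }
  destruct (has_dim_of_free_split Hf HS HU) as (HdJ & HdS & HdU & HdI).
  do 4 eexists. refine (conj HdJ (conj HdS (conj HdU (conj HdI _)))).
  rewrite !length_app. lia.
Qed.

Lemma dim_formula_adapted_base N S U dJ dS dU dI :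
  (forall l, free l -> length l <= N) -> subspace L S -> subspace L U ->
  has_dim L (cl (fun x => S x \/ U x)) dJ -> has_dim L S dS -> has_dim L U dU ->
  has_dim L (fun x => S x /\ U x) dI -> dJ = (dS + dU - dI)%Z ->
  exists B, base L B /\ (exists X, sub X B /\ seteq (cl X) S) /\
    (exists Y, sub Y B /\ seteq (cl Y) U).
Proof.
  intros HN HSs HUs HdJ HdS HdU HdI Hformula.
  destruct (free_extend HN (subspace_inter HSs HUs) (l := []) I) as (i & Hi & HiSU);
    [intros z []|].
  rewrite app_nil_r in Hi, HiSU. unfold seteq in HiSU.
  assert (HiSU' : sub (fun z => In z i) (fun x => S x /\ U x))
    by (intros z Hz; apply HiSU, closure_incl, Hz).
  destruct (free_extend HN HSs Hi) as (a & Ha & HaS); [intros z Hz; apply HiSU', Hz|].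
  destruct (free_extend HN HUs Hi) as (c & Hc & HcU); [intros z Hz; apply HiSU', Hz|].
  pose proof (span_app_union HaS HcU) as HJ.
  assert (Hlen : Z.of_nat (length (a ++ c ++ i)) = (dJ + 1)%Z).
  { pose proof (has_dim_unique (has_dim_free Hi HiSU) HdI).
    pose proof (has_dim_unique (has_dim_free Ha HaS) HdS).
    pose proof (has_dim_unique (has_dim_free Hc HcU) HdU).
    rewrite !length_app in *. lia. }
  destruct (free_extend HN subspace_full (free_of_min_length HdJ HJ Hlen)) as (e & He & Hall);
    [intros z _; exact I|].
  exists (fun z => In z (e ++ a ++ c ++ i)). split; [exact (free_spanning_base He Hall)|].
  split; [exists (fun z => In z (a ++ i)) | exists (fun z => In z (c ++ i))];
    (split; [set_incl | assumption]).
Qed.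

End Exchange.
End ClosureSystem.

Theorem proposition2p3 (P : Type) (L : (P -> Prop) -> Prop) (n : Z)
  (HL : linear_space L) (Hex : exchange_axiom L)
  (Hdim : has_dim L (fun _ : P => True) n)
  (S U : P -> Prop) (HS : subspace L S) (HU : subspace L U)
  (HSU : ~ seteq S U) :
  (exists B : P -> Prop, base L B /\
     (exists X, sub X B /\ seteq (closure L X) S) /\
     (exists Y, sub Y B /\ seteq (closure L Y) U))
  <->
  (exists dJ dS dU dI : Z,
     has_dim L (closure L (fun x => S x \/ U x)) dJ /\
     has_dim L S dS /\ has_dim L U dU /\
     has_dim L (fun x => S x /\ U x) dI /\
     dJ = (dS + dU - dI)%Z).
Proof.
  destruct (free_length_bound Hex Hdim) as [N HN].
  split.
  - intros (B & [HB _] & (X & HXB & HXS) & (Y & HYB & HYU)).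
    exact (adapted_base_dim_formula Hex HN HB HXB HYB HXS HYU).
  - intros (dJ & dS & dU & dI & HdJ & HdS & HdU & HdI & Hformula).
    exact (dim_formula_adapted_base Hex HN HS HU HdJ HdS HdU HdI Hformula).
Qed.
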